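(* There is no binary self-orthogonal $[46,6,22]$ code.
   Context: A binary linear code $C$ is self-orthogonal if $C\subseteq C^\perp$. *)

From HB Require Import structures.
From mathcomp Require Import all_boot all_order all_algebra.
Set Implicit Arguments. Unset Strict Implicit. Unset Printing Implicit Defensive.
Import GRing.Theory.
Local Open Scope ring_scope.

Definition binary_code (n : nat) := {vspace 'rV['F_2]_n}.

Definition wt (n : nat) (v : 'rV['F_2]_n) : nat := #|[set i | v 0 i != 0]|.

Definition dotF2 (n : nat) (u v : 'rV['F_2]_n) : 'F_2 := \sum_(i < n) u 0 i * v 0 i.

Definition in_dual (n : nat) (C : binary_code n) (v : 'rV['F_2]_n) : Prop :=
  forall u, u \in C -> dotF2 u v = 0.

Definition self_orthogonal (n : nat) (C : binary_code n) : Prop :=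
  forall v, v \in C -> in_dual C v.

Definition min_distance (n : nat) (C : binary_code n) (d : nat) : Prop :=
  (exists2 c, c \in C & (c != 0) && (wt c == d)) /\
  (forall c, c \in C -> c != 0 -> (d <= wt c)%N).

Arguments min_distance : clear implicits.

Definition is_nkd_code (n k d : nat) (C : binary_code n) : Prop :=
  \dim C = k /\ min_distance n C d.
Arguments is_nkd_code : clear implicits.

From HB Require Import structures.
From mathcomp Require Import all_boot all_order all_algebra.
From mathcomp Require Import finfield zify.

(* In a self-orthogonal binary code any two codewords meet in an even number of
   positions, so wt (u + v) = wt u + wt v (mod 4) and, all weights being even,
   the doubly-even codewords form a subcode D of index at most 2.  For a
   [46,6,22] code D has at least 32 words, and its nonzero words have weight
   at least 24.  Averaging weights coordinate by coordinate gives the Plotkin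
   bound (2d - n) #|D| <= 2d, which for n = 46, d = 24 allows at most 24 words. *)

Set Implicit Arguments. Unset Strict Implicit. Unset Printing Implicit Defensive.
Import GRing.Theory.
Local Open Scope ring_scope.

Lemma F2_cases (x : 'F_2) : x = 0 \/ x = 1.
Proof. by case: x => [[|[|m]] Hm] //; [left | right]; apply: val_inj. Qed.

Lemma leq_card_of_sums (V : finZmodType) (A B : {set V}) :
  {in A &, forall a e, a + e \in B} -> (#|A| <= #|B|)%N.
Proof.
move=> sumAB; have [-> | [e eA]] := set_0Vmem A; first by rewrite cards0.
rewrite -(card_imset A (addIr e)); apply/subset_leq_card/subsetP.
by move=> _ /imsetP[a aA ->]; exact: sumAB.
Qed.

Section Weights.
Variable n : nat.
Implicit Types u v : 'rV['F_2]_n.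

Definition supp v := [set i | v 0 i != 0].

Lemma supp_add u v : supp (u + v) = (supp u :|: supp v) :\: (supp u :&: supp v).
Proof.
apply/setP => i; rewrite !inE mxE.
by case: (F2_cases (u 0 i)) => ->; case: (F2_cases (v 0 i)) => ->.
Qed.

Lemma wt_add u v : (wt (u + v) + 2 * #|supp u :&: supp v| = wt u + wt v)%N.
Proof.
have sIU : supp u :&: supp v \subset supp u :|: supp v.
  exact: subset_trans (subsetIl _ _) (subsetUl _ _).
rewrite /wt -!/(supp _) supp_add cardsD (setIidPr sIU) -cardsUI.
have := subset_leq_card sIU; lia.
Qed.

Lemma dotF2E u v : dotF2 u v = #|supp u :&: supp v|%:R.
Proof.
rewrite /dotF2 -sum1_card natr_sum [RHS]big_mkcond; apply: eq_bigr => i _.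
rewrite !inE; case: (F2_cases (u 0 i)) => ->; case: (F2_cases (v 0 i)) => ->.
all: by rewrite ?mul0r ?mul1r.
Qed.

End Weights.

Section WeightSums.
Variable n : nat.
Implicit Types D : {set 'rV['F_2]_n}.

Lemma sum_wt_by_coord D :
  (\sum_(c in D) wt c = \sum_(i < n) #|[set c in D | i \in supp c]|)%N.
Proof.
under eq_bigr => c _ do rewrite /wt -sum1_card big_mkcond /=.
rewrite exchange_big; apply: eq_bigr => i _ /=.
rewrite -sum1_card [RHS]big_mkcond [LHS]big_mkcond; apply: eq_bigr => c _.
by rewrite !inE; case: (c \in D).
Qed.

Lemma sum_wt_add_closed D :
  {in D &, forall u v, u + v \in D} -> (2 * \sum_(c in D) wt c <= n * #|D|)%N.
Proof.
move=> addD; have half i : (2 * #|[set c in D | i \in supp c]| <= #|D|)%N.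
  set Di := [set c in D | i \in supp c].
  rewrite -(cardsID Di D) (setIidPr _); last by apply/subsetP => c; rewrite inE => /andP[].
  rewrite mul2n -addnn leq_add2l; apply: leq_card_of_sums => u v.
  rewrite !inE mxE => /andP[uD ui] /andP[vD vi].
  rewrite addD //= andbT negbK.
  by move: ui vi; case: (F2_cases (u 0 i)) => ->; case: (F2_cases (v 0 i)) => ->.
rewrite sum_wt_by_coord big_distrr /=.
have -> : (n * #|D| = \sum_(i < n) #|D|)%N by rewrite sum_nat_const card_ord.
by apply: leq_sum => i _; apply: half.
Qed.

Lemma sum_wt_min_wt D d :
  {in D, forall c, c != 0 -> (d <= wt c)%N} -> (d * (#|D| - 1) <= \sum_(c in D) wt c)%N.
Proof.
move=> minD; apply: (@leq_trans (d * #|D :\ 0%R|)).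
  by apply: leq_mul => //; rewrite (cardsD1 0 D) leq_subLR leq_add2r leq_b1.
rewrite mulnC -sum_nat_const big_mkcond [leqRHS]big_mkcond.
apply: leq_sum => c _; rewrite !inE.
by case: eqP => [// | /eqP c_nz] /=; case: ifP => // cD; apply: minD.
Qed.

Lemma plotkin_bound D d :
  {in D &, forall u v, u + v \in D} -> {in D, forall c, c != 0 -> (d <= wt c)%N} ->
  ((2 * d - n) * #|D| <= 2 * d)%N.
Proof.
move=> addD minD; have := sum_wt_add_closed addD; have := sum_wt_min_wt minD.
rewrite mulnBl; nia.
Qed.

End WeightSums.

Section SelfOrthogonal.
Variables (n : nat) (C : binary_code n).
Hypothesis C_so : self_orthogonal C.

Lemma self_orthogonal_meet_even u v :
  u \in C -> v \in C -> (2 %| #|supp u :&: supp v|)%N.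
Proof.
by move=> uC vC; rewrite (dvdn_pcharf (@pchar_Fp 2 isT)) -dotF2E; apply/eqP/C_so.
Qed.

Lemma self_orthogonal_wt_even u : u \in C -> (2 %| wt u)%N.
Proof. by move=> uC; have := self_orthogonal_meet_even uC uC; rewrite setIid. Qed.

Lemma self_orthogonal_wt_add u v :
  u \in C -> v \in C -> wt (u + v) = (wt u + wt v)%N %[mod 4].
Proof.
move=> uC vC; have := self_orthogonal_meet_even uC vC.
rewrite -(wt_add u v) => /dvdnP[k ->].
by rewrite mulnCA addnC modnMDl.
Qed.

Lemma self_orthogonal_dvd4_wt_add u v :
  u \in C -> v \in C -> (4 %| wt (u + v))%N = (4 %| wt u + wt v)%N.
Proof. by move=> uC vC; rewrite /dvdn self_orthogonal_wt_add. Qed.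

Definition doubly_even_part : {set 'rV['F_2]_n} := [set c | c \in C & 4 %| wt c]%N.

Lemma doubly_even_part_add :
  {in doubly_even_part &, forall u v, u + v \in doubly_even_part}.
Proof.
move=> u v; rewrite !inE => /andP[uC u4] /andP[vC v4].
by rewrite memvD //= self_orthogonal_dvd4_wt_add // dvdn_add.
Qed.

Lemma card_code_le_doubly_even_part : (2 ^ \dim C <= 2 * #|doubly_even_part|)%N.
Proof.
have <- : #|[set c | c \in C]| = (2 ^ \dim C)%N by rewrite cardsE card_vspace card_Fp.
rewrite -(cardsID doubly_even_part [set c | c \in C]) (setIidPr _); last first.
  by apply/subsetP => c; rewrite !inE => /andP[].
rewrite mul2n -addnn leq_add2l; apply: leq_card_of_sums => u v.
rewrite !inE => /andP[u4 uC] /andP[v4 vC]; rewrite uC in u4; rewrite vC in v4.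
rewrite memvD //= self_orthogonal_dvd4_wt_add //.
have := self_orthogonal_wt_even uC; have := self_orthogonal_wt_even vC; lia.
Qed.

End SelfOrthogonal.

Theorem proposition6p7 (C : binary_code 46) :
  is_nkd_code 46 6 22 C -> ~ self_orthogonal C.
Proof.
move=> [dimC [_ minC]] C_so.
have minD : {in doubly_even_part C, forall c, c != 0 -> (24 <= wt c)%N}.
  by move=> c; rewrite inE => /andP[cC c4] c_nz; have := minC c cC c_nz; lia.
have := card_code_le_doubly_even_part C_so; rewrite dimC.
have := plotkin_bound (doubly_even_part_add C_so) minD.
lia.
Qed.
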